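(* For every Sauer Matrix $S$ of size $k$, the set \[ \mathcal{P}(S) = \{ r \in [0,1]^k : \Delta_\ell(r+S) \le 1 \text{ for each } 1 \le \ell \le k\} \] is a polytope.
   Context: For a real matrix $M$ and $\ell\ge1$, $\Delta_\ell(M)$ denotes the maximum of $|\det(B)|$ over all $\ell\times\ell$ submatrices $B$ of $M$. For $r\in\mathbb{R}^k$ and a matrix $S$ with $k$ rows and columns $S_1,\dots,S_N$, $r+S$ is the matrix with columns $r+S_i$. A Sauer Matrix of size $k$ is a matrix $S\in\{-1,0,1\}^{k\times 2^k}$ such that every subset of $[k]$ is the support (set of nonzero coordinates) of exactly one column, the nonzero entries being arbitrary elements of $\{-1,1\}$. *)

From mathcomp Require Import all_boot all_order all_algebra.
From mathcomp Require Import reals.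
Set Implicit Arguments. Unset Strict Implicit. Unset Printing Implicit Defensive.
Import Order.TTheory GRing.Theory Num.Theory.
Local Open Scope ring_scope.

(* A submatrix is given by an injective choice of l rows and l columns
   (reordering rows/columns only changes the sign of the determinant).
   The maximum of an empty family is 0 (never relevant when l <= #rows,#cols). *)
Definition Delta (R : realType) (l m n : nat) (M : 'M[R]_(m, n)) : R :=
  \big[Num.max/0]_(f : {ffun 'I_l -> 'I_m} | injectiveb f)
    \big[Num.max/0]_(g : {ffun 'I_l -> 'I_n} | injectiveb g)
      `|\det (mxsub f g M)|.

Definition addcol (R : realType) (k N : nat) (r : 'cV[R]_k) (S : 'M[R]_(k, N))
  : 'M[R]_(k, N) := \matrix_(i, j) (r i 0 + S i j).

Definition col_support (R : realType) (k N : nat) (S : 'M[R]_(k, N)) (j : 'I_N)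
  : {set 'I_k} := [set i | S i j != 0].

Definition sauer_matrix (R : realType) (k : nat) (S : 'M[R]_(k, 2 ^ k)) : Prop :=
  (forall i j, S i j = -1 \/ S i j = 0 \/ S i j = 1) /\
  (forall A : {set 'I_k}, #|[set j | col_support S j == A]| = 1%N).

Definition PS (R : realType) (k : nat) (S : 'M[R]_(k, 2 ^ k)) (r : 'cV[R]_k) : Prop :=
  (forall i, 0 <= r i 0 <= 1) /\
  (forall l : nat, (1 <= l <= k)%N -> Delta l (addcol r S) <= 1).

Definition polytope (R : realType) (k : nat) (P : 'cV[R]_k -> Prop) : Prop :=
  (exists (n : nat) (A : 'M[R]_(n, k)) (b : 'cV[R]_n),
      forall x, P x <-> (forall i, (A *m x) i 0 <= b i 0)) /\
  (exists B : R, forall x, P x -> forall i, `|x i 0| <= B).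

(* The determinant of a fixed square submatrix of [r + S] is an affine function
   of [r]: subtracting the first column from the others cancels [r] in every
   column but the first, and Laplace expansion along that column is linear in
   [r].  Hence each condition [|det B| <= 1] is a pair of linear inequalities,
   there are finitely many of them, and together with [0 <= r <= 1] they cut
   out a bounded polyhedron. *)

From mathcomp Require Import all_boot all_order all_algebra.
From mathcomp Require Import reals.
From mathcomp Require Import ring.
Set Implicit Arguments. Unset Strict Implicit. Unset Printing Implicit Defensive.
Import Order.TTheory GRing.Theory Num.Theory.
Local Open Scope ring_scope.

Section Polyhedral.
Variables (R : realDomainType) (k : nat).
Implicit Types (P Q : 'cV[R]_k -> Prop) (a : 'rV[R]_k).

Definition polyhedral P : Prop :=
  exists (n : nat) (A : 'M[R]_(n, k)) (b : 'cV[R]_n),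
    forall x, P x <-> (forall i, (A *m x) i 0 <= b i 0).

Lemma polyhedral_ext P Q : (forall x, P x <-> Q x) -> polyhedral P -> polyhedral Q.
Proof. by move=> PQ [n [A [b Pab]]]; exists n, A, b => x; rewrite -PQ. Qed.

Lemma polyhedralT : polyhedral (fun=> True).
Proof. by exists 0%N, 0, 0 => x; split=> // _ []. Qed.

Lemma polyhedral_halfspace a c : polyhedral (fun x => (a *m x) 0 0 <= c).
Proof.
exists 1%N, a, (const_mx c) => x.
by split=> [ax i | /(_ 0)]; rewrite [const_mx _ _ _]mxE // [i]ord1.
Qed.

Lemma polyhedralI P Q : polyhedral P -> polyhedral Q ->
  polyhedral (fun x => P x /\ Q x).
Proof.
move=> [n1 [A1 [b1 P1]]] [n2 [A2 [b2 P2]]].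
exists (n1 + n2)%N, (col_mx A1 A2), (col_mx b1 b2) => x.
rewrite P1 P2 mul_col_mx; split=> [[A1x A2x] i | Ax].
  by rewrite -[i]splitK; case: (split i) => j /=; rewrite ?col_mxEu ?col_mxEd.
split=> i; first by have := Ax (lshift n2 i); rewrite !col_mxEu.
by have := Ax (rshift n1 i); rewrite !col_mxEd.
Qed.

Lemma polyhedral_forall_seq (T : eqType) (s : seq T) (P : T -> 'cV[R]_k -> Prop) :
  (forall t, polyhedral (P t)) -> polyhedral (fun x => forall t, t \in s -> P t x).
Proof.
move=> Ppoly; elim: s => [|t s IHs].
  by apply: polyhedral_ext polyhedralT => x.
apply: polyhedral_ext (polyhedralI (Ppoly t) IHs) => x; split.
  by move=> [Ptx Psx] u; rewrite inE => /predU1P[->|/Psx].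
by move=> Px; split=> [|u su]; apply: Px; rewrite inE ?eqxx ?su ?orbT.
Qed.

Lemma polyhedral_forall_in (T : finType) (D : pred T) (P : T -> 'cV[R]_k -> Prop) :
  (forall t, polyhedral (P t)) -> polyhedral (fun x => forall t, D t -> P t x).
Proof.
move=> /(polyhedral_forall_seq (enum D)); apply: polyhedral_ext => x.
by split=> Px t Dt; apply: Px; move: Dt; rewrite mem_enum.
Qed.

Lemma polyhedral_slab a lo hi : polyhedral (fun x => lo <= (a *m x) 0 0 <= hi).
Proof.
apply: polyhedral_ext (polyhedralI (polyhedral_halfspace (- a) (- lo))
                                   (polyhedral_halfspace a hi)) => x.
by rewrite mulNmx mxE lerN2; split=> [[-> ->] | /andP].
Qed.

Lemma polyhedral_norm_affine_le a c e :
  polyhedral (fun x => `|c + (a *m x) 0 0| <= e).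
Proof.
apply: polyhedral_ext (polyhedral_slab a (- e - c) (e - c)) => x.
by rewrite ler_norml lerBrDl lerBlDl addrC.
Qed.

Lemma polyhedral_box lo hi : polyhedral (fun x => forall i, lo <= x i 0 <= hi).
Proof.
apply: polyhedral_ext (polyhedral_forall_in predT
  (fun i => polyhedral_slab (delta_mx 0 i) lo hi)) => x.
have coord i : ((delta_mx 0 i : 'rV_k) *m x) 0 0 = x i 0 by rewrite -rowE mxE.
by split=> box i; [rewrite -coord | move=> _; rewrite coord]; apply: box.
Qed.

End Polyhedral.

Definition subcol0_mx (R : pzRingType) n : 'M[R]_n.+1 :=
  1%:M - \matrix_(i, j) ((i == 0) && (j != 0))%:R.

Lemma det_subcol0_mx (R : comPzRingType) n : \det (subcol0_mx R n) = 1.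
Proof.
rewrite -det_tr det_trig; last first.
  apply/is_trig_mxP => i j lt_ij; have j_gt0 := leq_ltn_trans (leq0n i) lt_ij.
  by rewrite !mxE -!val_eqE /= gtn_eqF // (gtn_eqF j_gt0) subrr.
by rewrite big1 // => i _; rewrite !mxE eqxx andbN subr0.
Qed.

Lemma mulmx_subcol0 (R : comPzRingType) n (A : 'M[R]_n.+1) i j :
  (A *m subcol0_mx R n) i j = A i j - (j != 0)%:R * A i 0.
Proof.
rewrite mulmxBr mulmx1 !mxE (bigD1 0) //= big1 ?addr0 => [|l /negbTE l0].
  by rewrite !mxE eqxx /= mulrC.
by rewrite mxE l0 mulr0.
Qed.

Lemma cofactor_eq_col' (R : comPzRingType) n (A B : 'M[R]_n) i j :
  col' j A = col' j B -> cofactor A i j = cofactor B i j.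
Proof. by rewrite /cofactor => ->. Qed.

Lemma det_add_const_cols (R : comPzRingType) n (A : 'M[R]_n) :
  exists d : 'rV[R]_n, forall u : 'cV[R]_n,
    \det (A + \matrix_(i, j) u i 0) = \det A + (d *m u) 0 0.
Proof.
case: n A => [|n] A; first by exists 0 => u; rewrite !det_mx00 mul0mx mxE addr0.
pose E := subcol0_mx R n; exists (\row_i cofactor (A *m E) i 0) => u.
set U := \matrix_(i, j) u i 0.
have cof_AUE i : cofactor ((A + U) *m E) i 0 = cofactor (A *m E) i 0.
  apply: cofactor_eq_col'; apply/matrixP => a b.
  rewrite [LHS]mxE [RHS]mxE !mulmx_subcol0 eq_sym neq_lift !mxE !mul1r.
  by rewrite opprD addrACA subrr addr0.
have detE B : \det B = \det (B *m E) by rewrite det_mulmx det_subcol0_mx mulr1.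
rewrite detE [\det A]detE !(expand_det_col _ 0) mxE -big_split /=.
apply: eq_bigr => i _; rewrite cof_AUE !mulmx_subcol0 eqxx !mxE !mul0r !subr0; ring.
Qed.

Lemma Delta_leP (R : realType) l m n (M : 'M[R]_(m, n)) e : 0 <= e ->
  Delta l M <= e <->
  forall f : {ffun 'I_l -> 'I_m}, injectiveb f ->
  forall g : {ffun 'I_l -> 'I_n}, injectiveb g -> `|\det (mxsub f g M)| <= e.
Proof.
move=> e_ge0; split=> [/bigmax_leP[_ Delta_le] f inj_f | detM_le].
  by have /bigmax_leP[_] := Delta_le f inj_f; apply.
by apply/bigmax_leP; split=> // f inj_f; apply/bigmax_leP; split=> // g; apply: detM_le.
Qed.

Section AddCol.
Variables (R : realType) (k N : nat) (S : 'M[R]_(k, N)).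

Lemma mxsub_addcol l (f : 'I_l -> 'I_k) (g : 'I_l -> 'I_N) r :
  mxsub f g (addcol r S) = mxsub f g S + \matrix_(i, j) (rowsub f r) i 0.
Proof. by apply/matrixP => i j; rewrite !mxE addrC. Qed.

Lemma det_mxsub_addcol_affine l (f : 'I_l -> 'I_k) (g : 'I_l -> 'I_N) :
  exists c (a : 'rV[R]_k), forall r,
    \det (mxsub f g (addcol r S)) = c + (a *m r) 0 0.
Proof.
have [d detE] := det_add_const_cols (mxsub f g S).
exists (\det (mxsub f g S)), (d *m rowsub f 1%:M) => r.
by rewrite mxsub_addcol detE -mulmxA -rowsubE.
Qed.

Lemma polyhedral_Delta_addcol_le l e : 0 <= e ->
  polyhedral (fun r => Delta l (addcol r S) <= e).
Proof.
move=> e_ge0; apply: polyhedral_ext (fun r => iff_sym (Delta_leP _ _ e_ge0)) _.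
apply: polyhedral_forall_in => f; apply: polyhedral_forall_in => g.
have [c [a detE]] := det_mxsub_addcol_affine f g.
by apply: polyhedral_ext (polyhedral_norm_affine_le a c e) => r; rewrite detE.
Qed.

End AddCol.

Theorem proposition4p1 (R : realType) (k : nat) (S : 'M[R]_(k, 2 ^ k)) :
  sauer_matrix S -> polytope (PS S).
Proof.
move=> _; split; last first.
  by exists 1 => r [box _] i; have /andP[r_ge0 r_le1] := box i; rewrite ger0_norm.
change (polyhedral (PS S)).
have Delta_le1 l := polyhedral_Delta_addcol_le S l ler01.
apply: polyhedral_ext (polyhedralI (polyhedral_box k 0 1)
                        (polyhedral_forall_seq (iota 1 k) Delta_le1)) => r.
have range l : (l \in iota 1 k) = (1 <= l <= k)%N by rewrite mem_iota add1n ltnS.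
by split=> -[box Delta_le]; split=> // l l_range; apply: Delta_le;
  rewrite range in l_range *.
Qed.
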